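(* Let $n\ge 1$, $k\ge 0$, and let $w(u_1,\dots,u_n)$ be a word lying in the commutator subgroup of the free group $\langle u_1,\dots,u_n\rangle$. Let $G$ be any finite group and $C_1,\dots,C_k$ any conjugacy classes of $G$. Then the number of tuples $(u_1,\dots,u_n,z_1,\dots,z_k)$ with $u_i\in G$, $z_i\in C_i$ and $w(u_1,\dots,u_n)\,z_1\cdots z_k=1$ is divisible by $|G|$. *)

From HB Require Import structures.
From mathcomp Require Import all_boot all_order all_fingroup.
Set Implicit Arguments. Unset Strict Implicit. Unset Printing Implicit Defensive.

(* Words in the free group on generators u_0, ..., u_{n-1}:
   a letter (i, false) stands for u_i, a letter (i, true) for u_i^-1. *)
Definition word (n : nat) := seq ('I_n * bool).

Definition word_inv n (w : word n) : word n :=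
  rev (map (fun l : 'I_n * bool => (l.1, ~~ l.2)) w).

Inductive free_step n : word n -> word n -> Prop :=
| FreeStep (a b : word n) (i : 'I_n) (e : bool) :
    free_step (a ++ (i, e) :: (i, ~~ e) :: b) (a ++ b).

Inductive free_equiv n : word n -> word n -> Prop :=
| FE_refl w : free_equiv w w
| FE_step w1 w2 : free_step w1 w2 -> free_equiv w1 w2
| FE_sym w1 w2 : free_equiv w1 w2 -> free_equiv w2 w1
| FE_trans w1 w2 w3 : free_equiv w1 w2 -> free_equiv w2 w3 -> free_equiv w1 w3.

Inductive in_commutator_subgroup n : word n -> Prop :=
| CS_nil : in_commutator_subgroup [::]
| CS_comm (a b : word n) :
    in_commutator_subgroup (word_inv a ++ word_inv b ++ a ++ b)
| CS_mul w1 w2 : in_commutator_subgroup w1 -> in_commutator_subgroup w2 ->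
    in_commutator_subgroup (w1 ++ w2)
| CS_inv w : in_commutator_subgroup w -> in_commutator_subgroup (word_inv w)
| CS_equiv w1 w2 : free_equiv w1 w2 -> in_commutator_subgroup w1 ->
    in_commutator_subgroup w2.

Definition word_eval (gT : finGroupType) n (u : 'I_n -> gT) (w : word n) : gT :=
  (\prod_(l <- w) (if l.2 then (u l.1)^-1 else u l.1))%g.

From HB Require Import structures.
From mathcomp Require Import all_boot all_order all_fingroup.
From mathcomp Require Import commutator.

(* Fix a pivot index i0 and write t for the pivot entry u_i0 of a tuple p.
   Let H be the subgroup generated by the conjugates, under powers of t, of
   all the other entries of p; t normalises H.  For c in C_G(H), replacing t
   by t c does not change H, and it does not change w(u) either: the pairs
   (u_i, u_i') of old and new entries lie in the group generated by the
   diagonal of H and (t, t c), which is a cyclic extension of that diagonal,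
   so its derived subgroup is diagonal.  Hence G x C_G(H) moves the tuple
   (conjugation times twisting of the pivot) inside the solution set, and the
   resulting classes partition it.  Each class has exactly |G| elements,
   because g conjugates a twisted copy of p to another one only if g lies in
   C_G(H), so every fibre of (g, c) |-> p has |C_G(H)| elements. *)

Set Implicit Arguments.
Unset Strict Implicit.
Unset Printing Implicit Defensive.

Import GroupScope.
Local Open Scope group_scope.

Lemma conjg_cent (gT : finGroupType) (A : {set gT}) x c :
  x \in A -> c \in 'C(A) -> x ^ c = x.
Proof. by move=> xA /centP cA; apply/conjg_fixP/commgP/commute_sym/cA. Qed.

Section WordEval.
Variables (gT : finGroupType) (n : nat).
Implicit Types (u v : 'I_n -> gT) (w : word n).

Lemma word_eval_nil u : word_eval u [::] = 1.
Proof. by rewrite /word_eval big_nil. Qed.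

Lemma word_eval_cons u l w :
  word_eval u (l :: w) = (if l.2 then (u l.1)^-1 else u l.1) * word_eval u w.
Proof. by rewrite /word_eval big_cons. Qed.

Lemma word_eval_cat u w1 w2 :
  word_eval u (w1 ++ w2) = word_eval u w1 * word_eval u w2.
Proof. by rewrite /word_eval big_cat. Qed.

Lemma word_eval_inv u w : word_eval u (word_inv w) = (word_eval u w)^-1.
Proof.
elim: w => [|l w IHw]; first by rewrite /word_inv /= word_eval_nil invg1.
rewrite /word_inv map_cons rev_cons -cats1 word_eval_cat -/(word_inv w) IHw.
rewrite !word_eval_cons word_eval_nil mulg1 invMg.
by case: l.2; rewrite /= ?invgK.
Qed.

Lemma word_eval_free_equiv u w1 w2 :
  free_equiv w1 w2 -> word_eval u w1 = word_eval u w2.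
Proof.
elim=> [//|_ _ [a b i e]|_ _ _ ->|_ _ _ _ -> _ -> //] //.
by rewrite !word_eval_cat !word_eval_cons; case: e; rewrite /= ?mulKg ?mulKVg.
Qed.

Lemma eq_word_eval u v w : u =1 v -> word_eval u w = word_eval v w.
Proof. by move=> euv; apply: eq_bigr => l _; rewrite euv. Qed.

Lemma word_eval_conj u g w :
  word_eval (fun i => u i ^ g) w = word_eval u w ^ g.
Proof.
elim: w => [|l w IHw]; first by rewrite !word_eval_nil conj1g.
by rewrite !word_eval_cons IHw conjMg; case: l.2; rewrite ?conjVg.
Qed.

Lemma mem_word_eval (B : {group gT}) u w :
  (forall i, u i \in B) -> word_eval u w \in B.
Proof.
move=> uB; elim: w => [|l w IHw]; first by rewrite word_eval_nil group1.
by rewrite word_eval_cons groupM //; case: l.2; rewrite ?groupV.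
Qed.

Lemma mem_word_eval_der1 (B : {group gT}) u w :
  (forall i, u i \in B) -> in_commutator_subgroup w ->
  word_eval u w \in [~: B, B].
Proof.
move=> uB; elim=> [|a b|w1 w2 _ IH1 _ IH2|w0 _ IH|w1 w2 E _ IH].
- by rewrite word_eval_nil group1.
- rewrite !word_eval_cat !word_eval_inv !mulgA -mulgA -(mulgA _^-1).
  by rewrite -conjgE -commgEl mem_commg ?mem_word_eval.
- by rewrite word_eval_cat groupM.
- by rewrite word_eval_inv groupV.
- by rewrite -(word_eval_free_equiv _ E).
Qed.

End WordEval.

Lemma word_eval_pair (gT hT : finGroupType) n (u : 'I_n -> gT) (v : 'I_n -> hT)
    (w : word n) :
  word_eval (fun i => (u i, v i)) w = (word_eval u w, word_eval v w).
Proof.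
elim: w => [|l w IHw]; first by rewrite !word_eval_nil.
by rewrite !word_eval_cons IHw; case: l.2.
Qed.

Section Diagonal.
Variables (gT : finGroupType) (H : {group gT}).

Definition diag_set : {set gT * gT} := [set x | (x.1 \in H) && (x.1 == x.2)].

Lemma diag_group_set : group_set diag_set.
Proof.
apply/group_setP; split=> [|x y]; first by rewrite inE /= group1 eqxx.
rewrite !inE => /andP[xH /eqP ex] /andP[yH /eqP ey].
by rewrite /= groupM // ex ey eqxx.
Qed.

Canonical diag_group := Group diag_group_set.

Variables (t c : gT).
Hypotheses (tN : t \in 'N(H)) (cC : c \in 'C(H)).

Lemma twisted_pair_norm_diag : (t, t * c) \in 'N(diag_group).
Proof.
apply/normP/eqP; rewrite eqEcard cardJg leqnn andbT.
apply/subsetP => _ /imsetP[x /[!inE] /andP[xH /eqP ex] ->].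
have xtH : x.1 ^ t \in H by rewrite memJ_norm.
have -> : (x ^ (t, t * c)).1 = x.1 ^ t by [].
have -> : (x ^ (t, t * c)).2 = x.2 ^ (t * c) by [].
by rewrite -ex conjgM (conjg_cent xtH cC) xtH eqxx.
Qed.

Lemma der1_diag_twisted_pair :
  [~: diag_group <*> <[(t, t * c)]>, diag_group <*> <[(t, t * c)]>]
    \subset diag_group.
Proof.
have nDt := twisted_pair_norm_diag.
apply: der1_min; first by rewrite join_subG normG cycle_subG.
by rewrite quotientYidl ?cycle_subG // quotient_abelian ?cycle_abelian.
Qed.

End Diagonal.

Section Twist.
Variables (gT : finGroupType) (n k : nat) (i0 : 'I_n).
Local Notation tuple := ({ffun 'I_n -> gT} * {ffun 'I_k -> gT})%type.
Implicit Types (p q : tuple) (g c d x : gT).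

Definition pivot p := p.1 i0.

Definition others p : {set gT} := p.1 @: [set~ i0] :|: [set p.2 j | j : 'I_k].

Definition pivot_group p := <<class_support (others p) <[pivot p]> >>.

Definition twist p c : tuple :=
  ([ffun i => if i == i0 then p.1 i * c else p.1 i], p.2).

Definition conj_tuple p g : tuple :=
  ([ffun i => p.1 i ^ g], [ffun j => p.2 j ^ g]).

Lemma others_sub_pivot_group p : others p \subset pivot_group p.
Proof. exact: subset_trans (sub_class_support _ _) (subset_gen _). Qed.

Lemma pivot_norm p : pivot p \in 'N(pivot_group p).
Proof.
apply: (subsetP (norm_gen _)); apply: (subsetP (class_support_norm _ _)).
exact: cycle_id.
Qed.

Lemma conj_twisted_pivotX p c x j :
  c \in 'C(pivot_group p) -> x \in pivot_group p ->
  x ^ ((pivot p * c) ^+ j) = x ^ (pivot p ^+ j).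
Proof.
move=> cC xH; elim: j => [|j IHj]; first by rewrite !expg0.
rewrite !expgSr !conjgM IHj (conjg_cent _ cC) //.
by rewrite !memJ_norm ?groupX ?pivot_norm.
Qed.

Lemma pivot_twist p c : pivot (twist p c) = pivot p * c.
Proof. by rewrite /pivot ffunE eqxx. Qed.

Lemma twist_inj p : injective (twist p).
Proof. by move=> c d /(congr1 pivot); rewrite !pivot_twist => /mulgI. Qed.

Lemma mem_others_fst p i : i != i0 -> p.1 i \in others p.
Proof. by move=> ni; rewrite inE imset_f ?in_setC1. Qed.

Lemma mem_others_snd p j : p.2 j \in others p.
Proof. by rewrite inE orbC imset_f ?inE. Qed.

Lemma others_twist p c : others (twist p c) = others p.
Proof.
congr (_ :|: _); apply: eq_in_imset => i.
by rewrite in_setC1 ffunE => /negPf->.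
Qed.

Lemma twistA p c d : twist (twist p c) d = twist p (c * d).
Proof.
congr pair; apply/ffunP => i; rewrite !ffunE.
by case: eqP => [->|_]; rewrite ?eqxx ?mulgA.
Qed.

Lemma twist1 p : twist p 1 = p.
Proof.
case: p => a b; congr pair; apply/ffunP => i; rewrite ffunE mulg1.
by case: eqP => // ->.
Qed.

Lemma pivot_group_twist_sub p c :
  c \in 'C(pivot_group p) -> pivot_group (twist p c) \subset pivot_group p.
Proof.
move=> cC; rewrite /pivot_group others_twist pivot_twist gen_subG.
apply/subsetP => _ /imset2P[x _ xS /cycleP[j ->] ->].
have xH := subsetP (others_sub_pivot_group p) x xS.
by rewrite conj_twisted_pivotX // mem_gen ?memJ_class_support ?mem_cycle.
Qed.

Lemma pivot_group_twist p c :
  c \in 'C(pivot_group p) -> pivot_group (twist p c) = pivot_group p.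
Proof.
move=> cC; apply/eqP; rewrite eqEsubset pivot_group_twist_sub //=.
rewrite -{1}[p](twist1 p) -(mulgV c) -twistA pivot_group_twist_sub // groupV.
exact: subsetP (centS (pivot_group_twist_sub cC)) c cC.
Qed.

Lemma conj_tuple1 p : conj_tuple p 1 = p.
Proof.
by case: p => a b; congr pair; apply/ffunP => i; rewrite ffunE conjg1.
Qed.

Lemma conj_tupleM p g d : conj_tuple (conj_tuple p g) d = conj_tuple p (g * d).
Proof. by congr pair; apply/ffunP => i; rewrite !ffunE conjgM. Qed.

Lemma conj_tupleK g : cancel (conj_tuple^~ g) (conj_tuple^~ g^-1).
Proof. by move=> p; rewrite conj_tupleM mulgV conj_tuple1. Qed.

Lemma twist_conj p g c :
  twist (conj_tuple p g) c = conj_tuple (twist p (c ^ g^-1)) g.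
Proof.
congr pair; apply/ffunP => i; rewrite !ffunE.
by case: eqP => // _; rewrite conjMg conjgKV.
Qed.

Lemma pivot_conj p g : pivot (conj_tuple p g) = pivot p ^ g.
Proof. by rewrite /pivot ffunE. Qed.

Lemma others_conj p g : others (conj_tuple p g) = others p :^ g.
Proof.
rewrite /others conjUg /conjugate -!imset_comp.
by congr (_ :|: _); apply: eq_imset => i; rewrite /= ffunE.
Qed.

Lemma pivot_group_conj_sub p g :
  pivot_group (conj_tuple p g) \subset pivot_group p :^ g.
Proof.
rewrite /pivot_group others_conj pivot_conj gen_subG.
apply/subsetP => _ /imset2P[_ _ /imsetP[x xS ->] /cycleP[j ->] ->].
rewrite -conjXg -conjJg memJ_conjg.
by rewrite mem_gen ?memJ_class_support ?mem_cycle.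
Qed.

Lemma pivot_group_conj p g :
  pivot_group (conj_tuple p g) = pivot_group p :^ g.
Proof.
apply/eqP; rewrite eqEcard pivot_group_conj_sub cardJg /=.
have := pivot_group_conj_sub (conj_tuple p g) g^-1.
by rewrite conj_tupleK => /subset_leq_card; rewrite cardJg.
Qed.

Lemma word_eval_twist p c w :
  c \in 'C(pivot_group p) -> in_commutator_subgroup w ->
  word_eval (twist p c).1 w = word_eval p.1 w.
Proof.
move=> cC hw; set H := [group of pivot_group p].
have tN : pivot p \in 'N(H) := pivot_norm p.
pose M := diag_group H <*> <[((pivot p, pivot p * c) : gT * gT)]>.
have uM i : ((p.1 i, (twist p c).1 i) : gT * gT) \in M.
  rewrite ffunE; case: eqP => [->|/eqP ni].
    by rewrite mem_gen // inE cycle_id orbT.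
  rewrite mem_gen // inE; apply/orP; left; rewrite inE eqxx andbT.
  exact: subsetP (others_sub_pivot_group p) _ (mem_others_fst p ni).
have := subsetP (der1_diag_twisted_pair tN cC) _ (mem_word_eval_der1 uM hw).
by rewrite word_eval_pair inE => /andP[_ /eqP].
Qed.

Definition twist_orbit p : {set tuple} :=
  [set conj_tuple (twist p x.2) x.1 | x in setX [set: gT] 'C(pivot_group p)].

Lemma twist_orbit_refl p : p \in twist_orbit p.
Proof.
apply/imsetP; exists (1, 1); first by rewrite !inE group1.
by rewrite /= twist1 conj_tuple1.
Qed.

Lemma twist_orbit_sub p q :
  q \in twist_orbit p -> twist_orbit q \subset twist_orbit p.
Proof.
case/imsetP => [[g c]]; rewrite inE => /andP[_ cC] ->.
apply/subsetP => y /imsetP[[g' c']]; rewrite inE => /andP[_].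
rewrite pivot_group_conj pivot_group_twist // centJ mem_conjg => dC ->.
rewrite twist_conj twistA conj_tupleM; apply/imsetP.
by exists (g * g', c * c' ^ g^-1); rewrite // !inE groupM.
Qed.

Lemma conj_twist_cent p c c' g :
  c \in 'C(pivot_group p) -> c' \in 'C(pivot_group p) ->
  conj_tuple (twist p c) g = twist p c' -> g \in 'C(pivot_group p).
Proof.
move=> cC c'C E.
have fix_others x : x \in others p -> x ^ g = x.
  case/setUP => /imsetP[i]; last first.
    by move=> _ ->; have := congr1 (fun q => q.2 i) E; rewrite !ffunE.
  rewrite in_setC1 => /negPf ni ->.
  by have := congr1 (fun q => q.1 i) E; rewrite !ffunE ni.
have Et : (pivot p * c) ^ g = pivot p * c'.
  by have := congr1 pivot E; rewrite pivot_conj !pivot_twist.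
rewrite /pivot_group cent_gen.
apply/centP => _ /imset2P[x _ xS /cycleP[j ->] ->].
have xH := subsetP (others_sub_pivot_group p) x xS.
apply/commute_sym/commgP/conjg_fixP.
rewrite -(conj_twisted_pivotX j cC xH) conjJg fix_others // conjXg Et.
by rewrite (conj_twisted_pivotX j c'C xH) (conj_twisted_pivotX j cC xH).
Qed.

Lemma conj_twist_stab p c g :
  g \in 'C(pivot_group p) ->
  conj_tuple (twist p (g ^ pivot p * c * g^-1)) g = twist p c.
Proof.
move=> gC; have fixH x : x \in others p -> x ^ g = x.
  by move=> xS; rewrite (conjg_cent _ gC) ?(subsetP (others_sub_pivot_group p)).
congr pair; apply/ffunP => i; rewrite !ffunE;
  last by rewrite /= fixH ?mem_others_snd.
case: eqP => [->|/eqP ni]; last by rewrite fixH ?mem_others_fst.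
by rewrite /pivot !conjgE !mulgA mulgVK mulgK mulVg mul1g.
Qed.

Lemma twist_orbit_fibre p g0 c0 : c0 \in 'C(pivot_group p) ->
  [set x in setX [set: gT] 'C(pivot_group p) |
     conj_tuple (twist p x.2) x.1 == conj_tuple (twist p c0) g0]
  = [set (h * g0, h ^ pivot p * c0 * h^-1) | h in 'C(pivot_group p)].
Proof.
move=> c0C; have tC : pivot p \in 'N('C(pivot_group p)).
  exact: subsetP (cent_norm _) _ (pivot_norm p).
apply/setP => [[g c]]; rewrite !inE /=; apply/idP/imsetP => [/andP[cC /eqP E]|].
  have E' : conj_tuple (twist p c) (g * g0^-1) = twist p c0.
    by rewrite -conj_tupleM E conj_tupleK.
  have hC := conj_twist_cent cC c0C E'.
  exists (g * g0^-1); rewrite // mulgVK; congr pair.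
  apply: (twist_inj (p := p)); apply: (can_inj (conj_tupleK (g * g0^-1))).
  by rewrite /= E' conj_twist_stab.
case=> h hC [-> ->]; rewrite -conj_tupleM conj_twist_stab // eqxx andbT.
by rewrite groupMr ?groupV // groupMr // memJ_norm.
Qed.

Lemma card_twist_orbit p : #|twist_orbit p| = #|[set: gT]|.
Proof.
set CH := 'C(pivot_group p).
suff E : #|setX [set: gT] CH| = (#|twist_orbit p| * #|CH|)%N.
  by apply/eqP; rewrite -(eqn_pmul2r (cardG_gt0 [group of CH])) -E cardsX.
pose f (x : gT * gT) := conj_tuple (twist p x.2) x.1.
rewrite -sum1_card (partition_big_imset f).
rewrite -sum_nat_const; apply: eq_bigr => q /imsetP[[g0 c0]].
rewrite inE => /andP[_ c0C] ->.
by rewrite sum1dep_card twist_orbit_fibre // card_imset // => x y [] /mulIg.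
Qed.

Lemma twist_orbit_eq p q : q \in twist_orbit p -> twist_orbit q = twist_orbit p.
Proof.
move=> qO; apply/eqP.
by rewrite eqEcard twist_orbit_sub //= !card_twist_orbit leqnn.
Qed.

End Twist.

Section Solutions.
Variables (gT : finGroupType) (n k : nat) (w : word n).
Variables (C : 'I_k -> {set gT}) (hC : forall i, C i \in classes [set: gT]).
Local Notation tuple := ({ffun 'I_n -> gT} * {ffun 'I_k -> gT})%type.
Implicit Types (p : tuple) (g c : gT).

Definition solutions : {set tuple} :=
  [set p : tuple | [forall i, p.2 i \in C i] &&
           (word_eval p.1 w * \prod_(i < k) p.2 i == 1)].

Lemma solutions_conj p g : p \in solutions -> conj_tuple p g \in solutions.
Proof.
rewrite !inE => /andP[/forallP Cp /eqP E]; apply/andP; split.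
  apply/forallP => i; rewrite ffunE; have /imsetP[x _ Cx] := hC i.
  by move: (Cp i); rewrite Cx -{2}(classGidr x (in_setT g)) memJ_conjg.
rewrite (eq_word_eval _ (fun i => ffunE _ i)) word_eval_conj.
rewrite (eq_bigr (fun i => p.2 i ^ g)) => [|i _]; last by rewrite ffunE.
by rewrite -conjg_prod -conjMg E conj1g.
Qed.

Hypothesis hw : in_commutator_subgroup w.

Lemma solutions_twist i0 p c : p \in solutions ->
  c \in 'C(pivot_group i0 p) -> twist i0 p c \in solutions.
Proof. by rewrite !inE => /andP[Cp E] cC; rewrite Cp word_eval_twist. Qed.

Lemma twist_orbit_sub_solutions i0 p :
  p \in solutions -> twist_orbit i0 p \subset solutions.
Proof.
move=> pS; apply/subsetP => q /imsetP[[g c]].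
by rewrite inE => /andP[_ cC] ->; rewrite solutions_conj ?solutions_twist.
Qed.

Lemma card_solutions_dvd (i0 : 'I_n) : #|[set: gT]| %| #|solutions|.
Proof.
have partS : partition (twist_orbit i0 @: solutions) solutions.
  apply/and3P; split.
  - rewrite eqEsubset; apply/andP; split.
      by apply/bigcupsP => _ /imsetP[p pS ->]; apply: twist_orbit_sub_solutions.
    apply/subsetP => p pS; apply/bigcupP; exists (twist_orbit i0 p).
      exact: imset_f.
    exact: twist_orbit_refl.
  - apply/trivIsetP => _ _ /imsetP[p _ ->] /imsetP[p' _ ->].
    apply: contraR => /pred0Pn[q /andP[qp qp']].
    by rewrite -(twist_orbit_eq qp) -(twist_orbit_eq qp').
  - by apply/imsetP => -[p _ /setP/(_ p)]; rewrite inE twist_orbit_refl.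
rewrite (card_partition partS) (eq_bigr (fun=> #|[set: gT]|)).
  by rewrite sum_nat_const dvdn_mull.
by move=> _ /imsetP[p _ ->]; rewrite card_twist_orbit.
Qed.

End Solutions.

Theorem mainTheorem7 (n k : nat) (hn : 0 < n) (w : word n)
  (hw : in_commutator_subgroup w) (gT : finGroupType)
  (C : 'I_k -> {set gT}) (hC : forall i, C i \in classes [set: gT]) :
  #|[set: gT]| %|
    #|[set p : {ffun 'I_n -> gT} * {ffun 'I_k -> gT} |
        [forall i, p.2 i \in C i] &&
        (word_eval p.1 w * \prod_(i < k) p.2 i == 1)%g]|.
Proof. exact: card_solutions_dvd hC hw (Ordinal hn). Qed.
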